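(* In the Standing Setup below, with $c\in\sigma$ the point of the inscribed triple of $\Delta_1=[1,g]\cup\sigma\cup[1,hg]$ lying on $\sigma=[g,hg]$, there is a constant $K_2>0$, depending only on $G,A,H$ (and not on the bigon), such that: if $\zeta$ is a subsegment of $\sigma$ whose midpoint is $c$ and which is contained in the closed $\delta$-neighborhood of $\alpha$ or in the closed $\delta$-neighborhood of $\beta$, then $l(\zeta)\le K_2$.
   Context: Standing Setup. $G$ is a word-hyperbolic group with marked finite generating set $\pi:A\to G$ (a finite alphabet $A$ with $\pi(A)$ generating $G$); $X=\Gamma(G,A)$ is its Cayley graph with word metric $d_X$, $|g|_X=d_X(1,g)$; $\delta\ge10$ is an integer such that all geodesic triangles of $X$ are $\delta$-trim; $H\le G$ is a subgroup that is $E$-quasiconvex in $X$ (every geodesic with endpoints in $H$ lies in the $E$-neighborhood of $H$). $Y=\Gamma(G/H,A)$ is the relative Cayley graph: vertices the right cosets $Hg$, and for each $(Hg,a)$ an edge from $Hg$ to $Hg\pi(a)$ labeled $a$, edges of length one. A path is near geodesic if it is $p_1p'p_2$ with $p_1,p',p_2$ geodesic and $l(p_1),l(p_2)\le1$. Key Lemma (Lemma 3.3): there is an integer $K_1>0$ such that whenever $g,f$ are $|\cdot|_X$-shortest in $Hg,Hf$, $w$ labels a near geodesic path in $Y$ from $Hg$ to $Hf$ and $h\in H$ satisfies $hf=g\bar w$, then $|h|_X\le K_1$. Bigon data: $g,f\in G$ are $|\cdot|_X$-shortest elements of their cosets; $\alpha',\beta'$ are near geodesic paths in $Y$ from $Hg$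 to $Hf$ with labels $w,u$; $h_1,h_2\in H$ satisfy $h_1g\bar w=f=h_2g\bar u$ (so $|h_i|_X\le K_1$); $f'=g\bar w$ and $h=h_1^{-1}h_2$, so $f'=hg\bar u$ and $|h|_X\le 2K_1$. Fix geodesics $[1,g]$, $[1,hg]$, $\sigma=[g,hg]$, $\alpha=[g,f']$, $\beta=[hg,f']$ in $X$. Inscribed triple: for a geodesic triangle with sides $[z,x],[z,y],[x,y]$, it is the unique points $p\in[z,x]$, $q\in[z,y]$, $r\in[x,y]$ with $d(z,p)=d(z,q)=(x,y)_z$, $d(x,p)=d(x,r)=(y,z)_x$, $d(y,q)=d(y,r)=(x,z)_y$, where $(x,y)_z=\frac12[d(z,x)+d(z,y)-d(x,y)]$. $\delta$-trim: for the sides $[z,x],[z,y]$, points at equal distance $\le(x,y)_z$ from $z$ are within $\delta$ of each other, and similarly at the vertices $x$ and $y$. *)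

From HB Require Import structures.
From mathcomp Require Import all_boot.
From Stdlib Require Import Reals ClassicalEpsilon.
Set Implicit Arguments.
Unset Strict Implicit.
Unset Printing Implicit Defensive.

Section CayleyDefs.
Variables (G : groupType) (A : finType) (pi : A -> G).

(** Words over A^{+-1}: (a, true) stands for a, (a, false) for a^{-1}. *)
Definition letter_val (x : A * bool) : G :=
  if x.2 then pi x.1 else ((pi x.1)^-1)%g.

Definition word_val (w : seq (A * bool)) : G :=
  foldr (fun x g => (letter_val x * g)%g) 1%g w.

Definition generates : Prop := forall g : G, exists w, word_val w = g.

Definition wlen (g : G) : nat :=
  epsilon (inhabits 0%N)
    (fun n => (exists w, size w = n /\ word_val w = g) /\
              (forall w, word_val w = g -> (n <= size w)%N)).

Definition dG (x y : G) : nat := wlen (x^-1 * y)%g.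

(** Points of the Cayley graph X = Gamma(G, A) (a metric graph with unit
    edges).  [OnEdge g a t] is the point at distance t (clamped to [0,1])
    from the vertex g along the edge (g,a) joining g to g pi(a). *)
Inductive pointX : Type :=
  | Vtx : G -> pointX
  | OnEdge : G -> A -> R -> pointX.

Definition clamp01 (t : R) : R := Rmax 0 (Rmin 1 t).

Definition ends (p : pointX) : seq (G * R) :=
  match p with
  | Vtx g => [:: (g, 0%R)]
  | OnEdge g a t => [:: (g, clamp01 t); ((g * pi a)%g, (1 - clamp01 t)%R)]
  end.

Definition minR (s : seq R) : R := foldr Rmin (head 0%R s) s.

(** The path metric of X (it is a pseudometric on representatives;
    different representatives of the same point are at distance 0). *)
Definition dX (p q : pointX) : R :=
  let c := minR [seq (INR (dG e1.1 e2.1) + e1.2 + e2.2)%R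
                   | e1 <- ends p, e2 <- ends q] in
  match p, q with
  | OnEdge g a t, OnEdge g' a' t' =>
      if (g == g') && (a == a') then Rmin (Rabs (clamp01 t - clamp01 t')) c
      else c
  | _, _ => c
  end.

Definition geodesic (x y : pointX) (gam : R -> pointX) : Prop :=
  dX (gam 0%R) x = 0%R /\ dX (gam (dX x y)) y = 0%R /\
  forall s t, (0 <= s <= dX x y)%R -> (0 <= t <= dX x y)%R ->
    dX (gam s) (gam t) = Rabs (s - t).

Definition gromov (z x y : pointX) : R :=
  ((dX z x + dX z y - dX x y) / 2)%R.

Definition trim_triangle (delta : R) (x y z : pointX)
    (gzx gzy gxy : R -> pointX) : Prop :=
  (forall s, (0 <= s <= gromov z x y)%R ->
     (dX (gzx s) (gzy s) <= delta)%R) /\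
  (forall s, (0 <= s <= gromov x y z)%R ->
     (dX (gzx (dX z x - s)) (gxy s) <= delta)%R) /\
  (forall s, (0 <= s <= gromov y x z)%R ->
     (dX (gzy (dX z y - s)) (gxy (dX x y - s)) <= delta)%R).

Definition all_triangles_trim (delta : R) : Prop :=
  forall (x y z : pointX) (gzx gzy gxy : R -> pointX),
    geodesic z x gzx -> geodesic z y gzy -> geodesic x y gxy ->
    trim_triangle delta x y z gzx gzy gxy.

Definition quasiconvex (H : {pred G}) (E : R) : Prop :=
  forall h1 h2 (gam : R -> pointX), h1 \in H -> h2 \in H ->
    geodesic (Vtx h1) (Vtx h2) gam ->
    forall s, (0 <= s <= dX (Vtx h1) (Vtx h2))%R ->
      exists h, h \in H /\ (dX (gam s) (Vtx h) <= E)%R.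

Definition same_coset (H : {pred G}) (x y : G) : Prop := (x * y^-1)%g \in H.

(** The path in Y = Gamma(G/H, A) starting at Hx with label w is geodesic. *)
Definition Ygeod (H : {pred G}) (x : G) (w : seq (A * bool)) : Prop :=
  forall v, same_coset H (x * word_val v)%g (x * word_val w)%g ->
    (size w <= size v)%N.

Definition near_geodesic (H : {pred G}) (x y : G) (w : seq (A * bool)) : Prop :=
  same_coset H (x * word_val w)%g y /\
  exists w1 w' w2, w = w1 ++ w' ++ w2 /\ (size w1 <= 1)%N /\ (size w2 <= 1)%N /\
    Ygeod H x w1 /\ Ygeod H (x * word_val w1)%g w' /\
    Ygeod H (x * word_val w1 * word_val w')%g w2.

Definition shortest_in_coset (H : {pred G}) (g : G) : Prop :=
  forall h, h \in H -> (wlen g <= wlen (h * g)%g)%N.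

End CayleyDefs.

From HB Require Import structures.
From mathcomp Require Import all_boot zify.
From Stdlib Require Import Reals Lra Classical ClassicalEpsilon.
From Stdlib Require List.
Set Implicit Arguments.
Unset Strict Implicit.
Unset Printing Implicit Defensive.

(** Reading geodesic words edge by edge gives geodesics between any two
    vertices of X, so thin triangles and quasiconvexity can be used freely.
    Key Lemma 3.3 follows: for k = h1^-1 and y = g w, the Gromov products
    (k,g)_1 and (1,y)_k are at most E + delta because g and f are shortest in
    their cosets, and the tripod inequality for 1, g, k, y then bounds |k|.
    Hence |h| <= 2 K1 with K1 = 4E + 6 delta + 4; since w and u are near
    geodesic, d(g,f') and d(hg,f') differ by at most 4, while
    0 <= |hg| - |g| <= |h| as g is shortest in Hg.  If sigma(s) is
    delta-close to alpha then
    s <= (hg,f')_g + delta <= c + (|h| + 4)/2 + delta; if it is delta-close to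
    beta then s >= c - 2 - delta.  A segment of length 2r centred at c inside
    one neighbourhood therefore has 2r <= 2 K1 + 2 delta + 4. *)

Lemma minR_le (s : seq R) x : List.In x s -> (minR s <= x)%R.
Proof.
rewrite /minR; elim: s (head 0%R s) => [|y s IH] d //= [->|Hx].
  exact: Rmin_l.
exact: Rle_trans (Rmin_r _ _) (IH d Hx).
Qed.

Lemma minR_In (s : seq R) : s <> [::] -> List.In (minR s) s.
Proof.
case: s => [//|y s] _; rewrite /minR /=.
have : foldr Rmin y s = y \/ List.In (foldr Rmin y s) s.
  elim: s => [|z s IH] /=; first by left.
  set m := foldr Rmin y s in IH *; rewrite /Rmin; case: Rle_dec => _.
    by right; left.
  by case: IH => [->|H]; [left|right; right].
set m := foldr Rmin y s; rewrite /Rmin; case: Rle_dec => _; first by left.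
by case=> [->|Hin]; [left|right].
Qed.

Lemma In_allpairs (T1 T2 T3 : Type) (f : T1 -> T2 -> T3) s t z :
  List.In z [seq f x y | x <- s, y <- t] <->
  exists x y, List.In x s /\ List.In y t /\ z = f x y.
Proof.
change (List.In z (List.concat [seq [seq f x y | y <- t] | x <- s]) <->
        exists x y, List.In x s /\ List.In y t /\ z = f x y).
rewrite List.in_concat; split.
- move=> [_ [/List.in_map_iff [x [<- Hx]] /List.in_map_iff [y [<- Hy]]]].
  by exists x, y.
- move=> [x [y [Hx [Hy ->]]]]; exists [seq f x y | y <- t].
  split; first exact: (List.in_map (fun x => [seq f x y | y <- t]) _ _ Hx).
  exact: (List.in_map (f x) _ _ Hy).
Qed.

Lemma ex_minimal_nat (P : nat -> Prop) :
  (exists n, P n) -> exists n, P n /\ forall m, P m -> (n <= m)%N.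
Proof.
move=> exP.
have [n [[Pn nmin] _]] :=
  @Wf_nat.dec_inh_nat_subset_has_unique_least_element P (fun n => classic (P n)) exP.
by exists n; split=> // m /nmin /leP.
Qed.

Section WordMetric.
Variables (G : groupType) (A : finType) (pi : A -> G).
Hypothesis gen : generates pi.
Local Notation wv := (word_val pi).
Local Notation wl := (wlen pi).

Definition word_inv (w : seq (A * bool)) : seq (A * bool) :=
  rev [seq (x.1, ~~ x.2) | x <- w].

Lemma size_word_inv w : size (word_inv w) = size w.
Proof. by rewrite size_rev size_map. Qed.

Lemma word_val_cat u v : wv (u ++ v) = (wv u * wv v)%g.
Proof. by elim: u => [|x u IH] /=; rewrite ?mul1g // IH mulgA. Qed.

Lemma word_val_rcons w x : wv (rcons w x) = (wv w * letter_val pi x)%g.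
Proof. by rewrite -cats1 word_val_cat /= mulg1. Qed.

Lemma word_val_inv w : wv (word_inv w) = ((wv w)^-1)%g.
Proof.
elim: w => [|[a b] w IH]; first by rewrite /= invg1.
rewrite /word_inv map_cons rev_cons word_val_rcons -/(word_inv w) IH invgM.
by case: b; rewrite /letter_val /= ?invgK.
Qed.

Lemma wlen_spec g : (exists w, size w = wl g /\ wv w = g) /\
                    (forall w, wv w = g -> (wl g <= size w)%N).
Proof.
rewrite /wlen; match goal with |- context[epsilon ?i ?P] => apply: (epsilon_spec i P) end.
have [w <-] := gen g.
have /ex_minimal_nat [n [[v [Sv Ev]] nmin]] : exists n v, size v = n /\ wv v = wv w.
  by exists (size w), w.
by exists n; split; [exists v|move=> u Eu; apply: nmin; exists u].
Qed.

Lemma wlen_le_size w : (wl (wv w) <= size w)%N.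
Proof. exact: (proj2 (wlen_spec _)). Qed.

Lemma wlen_word g : exists w, size w = wl g /\ wv w = g.
Proof. exact: (proj1 (wlen_spec g)). Qed.

Lemma wlen1 : wl 1%g = 0%N.
Proof. by apply/eqP; rewrite -leqn0; apply: (wlen_le_size [::]). Qed.

Lemma wlenM x y : (wl (x * y)%g <= wl x + wl y)%N.
Proof.
have [u [<- <-]] := wlen_word x; have [v [<- <-]] := wlen_word y.
by rewrite -size_cat -word_val_cat wlen_le_size.
Qed.

Lemma wlenV x : wl (x^-1)%g = wl x.
Proof.
suff wlenV_le : forall y, (wl (y^-1)%g <= wl y)%N.
  by apply/eqP; rewrite eqn_leq wlenV_le; have := wlenV_le (x^-1)%g; rewrite invgK.
move=> y; have [u [<- <-]] := wlen_word y.
by rewrite -size_word_inv -word_val_inv wlen_le_size.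
Qed.

Lemma wlen_gen a : (wl (pi a) <= 1)%N.
Proof. by have := wlen_le_size [:: (a, true)]; rewrite /= mulg1. Qed.

Lemma dGC x y : dG pi x y = dG pi y x.
Proof. by rewrite /dG -wlenV invgM invgK. Qed.

Lemma dG_triangle x y z : (dG pi x z <= dG pi x y + dG pi y z)%N.
Proof. by rewrite /dG; have := wlenM (x^-1 * y)%g (y^-1 * z)%g; rewrite mulgA mulgK. Qed.

Lemma dGxx x : dG pi x x = 0%N.
Proof. by rewrite /dG mulVg wlen1. Qed.

Lemma dG_mul2l k x y : dG pi (k * x)%g (k * y)%g = dG pi x y.
Proof. by rewrite /dG invgM -mulgA mulKg. Qed.

End WordMetric.

Section PathMetric.
Variables (G : groupType) (A : finType) (pi : A -> G).
Hypothesis gen : generates pi.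
Local Notation dX := (dX pi).
Local Notation ends := (@ends G A pi).
Local Notation V := (@Vtx G A).
Local Open Scope R_scope.

Definition dist_via (e1 e2 : G * R) : R := INR (dG pi e1.1 e2.1) + e1.2 + e2.2.

Lemma clamp01_bounds t : 0 <= clamp01 t <= 1.
Proof. rewrite /clamp01 /Rmax /Rmin; repeat case: Rle_dec; lra. Qed.

Lemma clamp01_id t : 0 <= t <= 1 -> clamp01 t = t.
Proof. rewrite /clamp01 /Rmax /Rmin; repeat case: Rle_dec; lra. Qed.

Lemma dX_le_via p q e1 e2 : List.In e1 (ends p) -> List.In e2 (ends q) ->
  dX p q <= dist_via e1 e2.
Proof.
move=> H1 H2.
have /minR_le : List.In (dist_via e1 e2) [seq dist_via e1 e2 | e1 <- ends p, e2 <- ends q].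
  by apply/In_allpairs; exists e1, e2.
rewrite /dX; case: p H1 => [x|x a t] _; case: q H2 => [y|y b t'] _ // Hmin.
by case: ifP => _ //; apply: Rle_trans (Rmin_r _ _) Hmin.
Qed.

Lemma dX_le_same_edge x a t t' :
  dX (OnEdge x a t) (OnEdge x a t') <= Rabs (clamp01 t - clamp01 t').
Proof. by rewrite /dX !eqxx /=; apply: Rmin_l. Qed.

Lemma dX_attained p q :
  (exists e1 e2, List.In e1 (ends p) /\ List.In e2 (ends q) /\ dX p q = dist_via e1 e2) \/
  (exists x a t t', p = OnEdge x a t /\ q = OnEdge x a t' /\
     dX p q = Rabs (clamp01 t - clamp01 t')).
Proof.
set s := [seq dist_via e1 e2 | e1 <- ends p, e2 <- ends q].
have /minR_In/In_allpairs [e1 [e2 [H1 [H2 Emin]]]] : s <> [::].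
  by rewrite /s; case: (p) => [?|? ? ?]; case: (q).
have [Ed|] : dX p q = minR s \/
  (exists x a t t', p = OnEdge x a t /\ q = OnEdge x a t' /\
     dX p q = Rabs (clamp01 t - clamp01 t')); last by right.
  rewrite /dX /s; case: (p) => [x|x a t]; case: (q) => [y|y b t']; try by left.
  case: ifP => [/andP [/eqP <- /eqP <-]|]; last by left.
  rewrite /Rmin; case: Rle_dec => _; last by left.
  by right; exists x, a, t, t'.
by left; exists e1, e2; rewrite Ed Emin.
Qed.

Lemma ends_offset_bounds p e : List.In e (ends p) -> 0 <= e.2 <= 1.
Proof.
case: p => [x|x a t] /=; first by case=> [<-|//] /=; lra.
by move=> He; have := clamp01_bounds t; case: He => [<-|[<-|//]] /=; lra.
Qed.

Lemma ends_dG_le p e e' : List.In e (ends p) -> List.In e' (ends p) ->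
  INR (dG pi e.1 e'.1) <= e.2 + e'.2.
Proof.
have dG0 x : INR (dG pi x x) = 0 by rewrite (dGxx gen).
case: p => [x|x a t] /=.
  by case=> [<-|//]; case=> [<-|//]; rewrite /= dG0; lra.
have Hc := clamp01_bounds t.
have Hedge : INR (dG pi x (x * pi a)%g) <= 1.
  by rewrite /dG mulKg; apply: (le_INR _ 1); apply/leP; apply: (wlen_gen gen).
case=> [<-|[<-|//]]; case=> [<-|[<-|//]]; rewrite /= ?dG0; try lra.
by rewrite (dGC gen); lra.
Qed.

Lemma dX_ge0 p q : 0 <= dX p q.
Proof.
case: (dX_attained p q) => [[e1 [e2 [H1 [H2 ->]]]]|[x [a [t [t' [_ [_ ->]]]]]]].
  have := ends_offset_bounds H1; have := ends_offset_bounds H2.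
  have := pos_INR (dG pi e1.1 e2.1); rewrite /dist_via; lra.
exact: Rabs_pos.
Qed.

Lemma dXC p q : dX p q = dX q p.
Proof.
wlog suff : p q / dX p q <= dX q p by move=> H; apply: Rle_antisym.
case: (dX_attained q p) => [[e1 [e2 [H1 [H2 ->]]]]|[x [a [t [t' [-> [-> ->]]]]]]].
  by apply: Rle_trans (dX_le_via H2 H1) _; rewrite /dist_via (dGC gen); lra.
by rewrite Rabs_minus_sym; apply: dX_le_same_edge.
Qed.

Lemma dX_Vtx x y : dX (V x) (V y) = INR (dG pi x y).
Proof. by rewrite /dX /= /minR /= Rmin_left; lra. Qed.

Lemma dX_Vtx_mul2l k x y : dX (V (k * x)%g) (V (k * y)%g) = dX (V x) (V y).
Proof. by rewrite !dX_Vtx dG_mul2l. Qed.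

Lemma dXpp p : dX p p = 0.
Proof.
apply: Rle_antisym; last exact: dX_ge0.
case: p => [x|x a t]; first by rewrite dX_Vtx (dGxx gen) /=; lra.
by apply: Rle_trans (dX_le_same_edge _ _ _ _) _; rewrite Rminus_diag Rabs_R0; lra.
Qed.

Lemma ends_same_edge x a t t' e' : List.In e' (ends (OnEdge x a t')) ->
  exists e, List.In e (ends (OnEdge x a t)) /\ e.1 = e'.1 /\
            e.2 <= e'.2 + Rabs (clamp01 t - clamp01 t').
Proof.
case=> [<-|[<-|//]].
  by exists (x, clamp01 t); split; [by left|split=> //=]; split_Rabs; lra.
exists ((x * pi a)%g, 1 - clamp01 t); split; [by right; left|split=> //=].
split_Rabs; lra.
Qed.

Lemma dX_triangle p q r : dX p r <= dX p q + dX q r.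
Proof.
case: (dX_attained p q) => [[e1 [e2 [H1 [H2 E1]]]]|[x [a [t [t' [Ep [Eq E1]]]]]]];
case: (dX_attained q r) => [[e2' [e3 [H2' [H3 E2]]]]|[y [b [u [u' [Eq' [Er E2]]]]]]].
- apply: Rle_trans (dX_le_via H1 H3) _; rewrite E1 E2 /dist_via.
  have := ends_dG_le H2 H2'.
  have /leP/le_INR := dG_triangle gen e1.1 e2.1 e2'.1.
  have /leP/le_INR := dG_triangle gen e1.1 e2'.1 e3.1.
  rewrite !plus_INR; lra.
- subst q r; have [e [He [Ee Hle]]] := ends_same_edge u' H2.
  apply: Rle_trans (dX_le_via H1 He) _; rewrite E1 E2 /dist_via Ee.
  rewrite Rabs_minus_sym in Hle; lra.
- subst p q; have [e [He [Ee Hle]]] := ends_same_edge t H2'.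
  by apply: Rle_trans (dX_le_via He H3) _; rewrite E1 E2 /dist_via Ee; lra.
- subst p q r; case: Eq' => ? ? ?; subst.
  by apply: Rle_trans (dX_le_same_edge _ _ _ _) _; rewrite E1 E2; apply: R_dist_tri.
Qed.

End PathMetric.

Section WordGeodesics.
Variables (G : groupType) (A : finType) (pi : A -> G).
Hypothesis gen : generates pi.
Local Notation dX := (dX pi).
Local Notation ends := (@ends G A pi).
Local Notation V := (@Vtx G A).
Local Notation wv := (word_val pi).
Local Notation wl := (wlen pi).

Lemma wlen_subword w i j : wl (wv w) = size w -> (i <= j <= size w)%N ->
  wl ((wv (take i w))^-1 * wv (take j w))%g = (j - i)%N.
Proof.
move=> geo /andP [ij jn].
set mid := take (j - i) (drop i w).
have Ej : take j w = take i w ++ mid by rewrite /mid -takeD subnKC.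
have Smid : size mid = (j - i)%N by rewrite /mid size_takel // size_drop; lia.
rewrite Ej word_val_cat mulKg; apply/eqP; rewrite eqn_leq -{1}Smid (wlen_le_size gen) /=.
have Ew : w = take i w ++ mid ++ drop j w by rewrite catA -Ej cat_take_drop.
have := geo; rewrite {1}Ew !word_val_cat => geo'.
have H1 := wlenM gen (wv (take i w)) (wv mid * wv (drop j w))%g.
have H2 := wlenM gen (wv mid) (wv (drop j w)).
have H3 := wlen_le_size gen (take i w); have H4 := wlen_le_size gen (drop j w).
rewrite size_drop in H4; rewrite size_takel in H3; last by lia.
rewrite geo' in H1; lia.
Qed.

Lemma word_val_take_succ l0 w i : (i < size w)%N ->
  wv (take i.+1 w) = (wv (take i w) * letter_val pi (nth l0 w i))%g.
Proof. by move=> Hi; rewrite (take_nth l0 Hi) word_val_rcons. Qed.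

Lemma dG_prefixes w x i j : wl (wv w) = size w -> (i <= size w)%N -> (j <= size w)%N ->
  INR (dG pi (x * wv (take i w))%g (x * wv (take j w))%g) = Rabs (INR i - INR j).
Proof.
wlog ij : i j / (i <= j)%N.
  move=> Hwlog geo Hi Hj; case: (leqP i j) => [|/ltnW] ij; first exact: Hwlog.
  by rewrite (dGC gen) Rabs_minus_sym Hwlog.
move=> geo _ Hj; rewrite dG_mul2l /dG wlen_subword ?ij //.
rewrite minus_INR; last exact/leP.
rewrite Rabs_minus_sym Rabs_right //; move/leP: ij => /le_INR; lra.
Qed.

Lemma prefix_inj w x i j : wl (wv w) = size w -> (i <= size w)%N -> (j <= size w)%N ->
  (x * wv (take i w))%g = (x * wv (take j w))%g -> i = j.
Proof.
move=> geo Hi Hj Eij; have := dG_prefixes x geo Hi Hj.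
rewrite Eij (dGxx gen) /= => Hd; apply: INR_eq; move: Hd; split_Rabs; lra.
Qed.

(** The point at distance [c] from [y] on the edge read by [l] at [y]. *)
Definition edge_point (y : G) (l : A * bool) (c : R) : pointX G A :=
  if l.2 then OnEdge y l.1 c else OnEdge (y * (pi l.1)^-1)%g l.1 (1 - c).

Fixpoint word_path (w : seq (A * bool)) (x : G) (s : R) : pointX G A :=
  match w with
  | [::] => V x
  | l :: w' => if Rle_dec s 1 then edge_point x l s
               else word_path w' (x * letter_val pi l)%g (s - 1)
  end.

Local Open Scope R_scope.

Lemma ends_edge_point y l c : 0 <= c <= 1 -> forall e, List.In e (ends (edge_point y l c)) ->
  e = (y, c) \/ e = ((y * letter_val pi l)%g, 1 - c).
Proof.
move=> Hc e; case: l => a [] /=; rewrite /edge_point /= clamp01_id; try lra.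
  by case=> [<-|[<-|//]]; [left|right].
rewrite mulgVK; case=> [<-|[<-|//]]; [right|left]; congr pair; lra.
Qed.

Lemma edge_point_In_start y l c : 0 <= c <= 1 -> List.In (y, c) (ends (edge_point y l c)).
Proof.
move=> Hc; case: l => a [] /=; rewrite /edge_point /= clamp01_id; try lra; first by left.
by rewrite mulgVK; right; left; congr pair; lra.
Qed.

Lemma edge_point_In_end y l c : 0 <= c <= 1 ->
  List.In ((y * letter_val pi l)%g, 1 - c) (ends (edge_point y l c)).
Proof.
move=> Hc; case: l => a [] /=; rewrite /edge_point /= clamp01_id; try lra.
  by right; left.
by left.
Qed.

Lemma word_path_on_edge l0 w x s : w <> [::] -> 0 <= s <= INR (size w) ->
  exists i, (i < size w)%nat /\ INR i <= s <= INR i + 1 /\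
    word_path w x s = edge_point (x * wv (take i w))%g (nth l0 w i) (s - INR i).
Proof.
elim: w x s => [//|l w IH] x s _ Hs /=.
case: Rle_dec => Hs1.
  by exists 0%nat; rewrite /= mulg1 Rminus_0_r; split=> //; split=> //; lra.
have Hw : w <> [::] by move=> Ew; move: Hs Hs1; rewrite Ew /=; lra.
have Hs' : 0 <= s - 1 <= INR (size w).
  by move: Hs; rewrite [size _]/= S_INR; lra.
have [i [Hi [Hsi ->]]] := IH (x * letter_val pi l)%g (s - 1) Hw Hs'.
exists i.+1; split=> //; rewrite S_INR /= mulgA; split; first lra.
by congr edge_point; ring.
Qed.

Section GeodesicWord.
Variables (w : seq (A * bool)) (x : G) (l0 : A * bool).
Hypothesis geo : wl (wv w) = size w.
Hypothesis w_neq0 : w <> [::].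
Local Notation Y i := (x * wv (take i w))%g.
Local Notation path := (word_path w x).

Lemma ends_edge_point_prefix i s e : (i < size w)%nat -> INR i <= s <= INR i + 1 ->
  List.In e (ends (edge_point (Y i) (nth l0 w i) (s - INR i))) ->
  exists a, (a = i \/ a = i.+1) /\ e = (Y a, Rabs (s - INR a)).
Proof.
move=> Hi Hsi /ends_edge_point [|->|->]; first lra.
  by exists i; split; [left|congr pair; rewrite Rabs_right; lra].
exists i.+1; split; first by right.
by rewrite (word_val_take_succ l0 Hi) mulgA S_INR Rabs_left1; [congr pair|]; lra.
Qed.

Lemma edge_point_In_next i s : (i < size w)%nat -> INR i <= s <= INR i + 1 ->
  List.In (Y i.+1, INR i + 1 - s) (ends (edge_point (Y i) (nth l0 w i) (s - INR i))).
Proof.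
move=> Hi Hsi; rewrite (word_val_take_succ l0 Hi) mulgA.
have -> : INR i + 1 - s = 1 - (s - INR i) by ring.
by apply: edge_point_In_end; lra.
Qed.

Lemma same_edge_word_path i j s t z c u u' : (i < size w)%nat -> (j < size w)%nat ->
  INR i <= s <= INR i + 1 -> INR j <= t <= INR j + 1 ->
  edge_point (Y i) (nth l0 w i) (s - INR i) = OnEdge z c u ->
  edge_point (Y j) (nth l0 w j) (t - INR j) = OnEdge z c u' ->
  Rabs (s - t) <= Rabs (clamp01 u - clamp01 u').
Proof.
move=> Hi Hj Hsi Htj.
have Ii : (i <= size w)%nat by apply: ltnW.
have Ij : (j <= size w)%nat by apply: ltnW.
have Nx : Y i.+1 = (Y i * letter_val pi (nth l0 w i))%g.
  by rewrite (word_val_take_succ l0 Hi) mulgA.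
have Ny : Y j.+1 = (Y j * letter_val pi (nth l0 w j))%g.
  by rewrite (word_val_take_succ l0 Hj) mulgA.
(* The shared edge has prefix vertices of the geodesic word as both ends,
   which forces [i = j] with the same orientation. *)
rewrite /edge_point; case: (nth l0 w i) Nx => ai []; case: (nth l0 w j) Ny => aj [] /=
  Ny Nx [E1 E2 E3] [E1' E2' E3'].
- have ij : i = j by apply: (prefix_inj (x:=x) geo Ii Ij); rewrite E1 E1'.
  subst; rewrite !clamp01_id; try lra.
  have -> : s - INR j - (t - INR j) = s - t by ring.
  exact: Rle_refl.
- have ij : i = j.+1 by apply: (prefix_inj (x:=x) geo Ii Hj); rewrite Ny E1 -E1'.
  have ji : i.+1 = j.
    by apply: (prefix_inj (x:=x) geo Hi Ij); rewrite Nx E1 -E1' E2 -E2' mulgVK.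
  by exfalso; lia.
- have ij : j = i.+1 by apply: (prefix_inj (x:=x) geo Ij Hi); rewrite Nx E1' -E1.
  have ji : j.+1 = i.
    by apply: (prefix_inj (x:=x) geo Hj Ii); rewrite Ny E1' -E1 E2' -E2 mulgVK.
  by exfalso; lia.
- have [ij] : i.+1 = j.+1 by apply: (prefix_inj (x:=x) geo Hi Hj); rewrite Nx Ny E1 -E1'.
  subst; rewrite !clamp01_id; try lra.
  have -> : 1 - (s - INR j) - (1 - (t - INR j)) = t - s by ring.
  by rewrite Rabs_minus_sym; lra.
Qed.

Lemma dX_word_path_ge s t : 0 <= s <= INR (size w) -> 0 <= t <= INR (size w) ->
  Rabs (s - t) <= dX (path s) (path t).
Proof.
move=> Hs Ht.
have [i [Hi [Hsi Es]]] := word_path_on_edge l0 x w_neq0 Hs.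
have [j [Hj [Htj Et]]] := word_path_on_edge l0 x w_neq0 Ht.
case: (dX_attained pi (path s) (path t)); rewrite Es Et.
  move=> [e1 [e2 [H1 [H2 ->]]]].
  have [a [Ha ->]] := ends_edge_point_prefix Hi Hsi H1.
  have [b [Hb ->]] := ends_edge_point_prefix Hj Htj H2.
  have Ia : (a <= size w)%nat by case: Ha => ->; lia.
  have Ib : (b <= size w)%nat by case: Hb => ->; lia.
  by rewrite /dist_via /= (dG_prefixes x geo Ia Ib); split_Rabs; lra.
move=> [z [c [u [u' [Ez [Ez' ->]]]]]].
exact: same_edge_word_path Hi Hj Hsi Htj Ez Ez'.
Qed.

Lemma dX_word_path_le_sub s t : 0 <= s -> s <= t -> t <= INR (size w) ->
  dX (path s) (path t) <= t - s.
Proof.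
move=> Hs0 Hst Htn.
have [i [Hi [Hsi Es]]] := word_path_on_edge l0 x w_neq0 (conj Hs0 (Rle_trans _ _ _ Hst Htn)).
have [j [Hj [Htj Et]]] := word_path_on_edge l0 x w_neq0 (conj (Rle_trans _ _ _ Hs0 Hst) Htn).
case: (Req_dec s t) => [<-|Hne]; first by rewrite (dXpp gen); lra.
have ij : (i <= j)%nat by rewrite -ltnS; apply/ltP/INR_lt; rewrite S_INR; lra.
rewrite Es Et; move: ij; rewrite leq_eqVlt => /orP [/eqP eqij|ltij].
  subst j; rewrite /edge_point; case: (nth l0 w i) => a [] /=;
  apply: Rle_trans (dX_le_same_edge pi _ _ _ _) _;
  by rewrite !clamp01_id; try lra; split_Rabs; lra.
have Hsi' : 0 <= t - INR j <= 1 by lra.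
apply: Rle_trans (dX_le_via (edge_point_In_next Hi Hsi) (edge_point_In_start _ _ Hsi')) _.
rewrite /dist_via /= (dG_prefixes x geo Hi (ltnW Hj)) S_INR.
have /le_INR : (i.+1 <= j)%coq_nat by apply/leP.
by rewrite S_INR => Hij; split_Rabs; lra.
Qed.

Lemma dX_word_path_le s t : 0 <= s <= INR (size w) -> 0 <= t <= INR (size w) ->
  dX (path s) (path t) <= Rabs (s - t).
Proof.
move=> Hs Ht; case: (Rle_dec s t) => Hst.
  by rewrite Rabs_minus_sym Rabs_right; [apply: dX_word_path_le_sub|]; lra.
by rewrite (dXC gen) Rabs_right; [apply: dX_word_path_le_sub|]; lra.
Qed.

Lemma word_path_geodesic : geodesic pi (V x) (V (x * wv w)%g) path.
Proof.
have Dw : dX (V x) (V (x * wv w)%g) = INR (size w) by rewrite dX_Vtx /dG mulKg geo.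
have Hn : 1 <= INR (size w) by apply: (le_INR 1); apply/leP; case: (w) w_neq0.
have Hn0 : 0 <= INR (size w) <= INR (size w) by lra.
rewrite /geodesic Dw; split; last split.
- apply: Rle_antisym; last exact: dX_ge0.
  case: (w) w_neq0 => [//|l w'] _ /=; case: Rle_dec => [H01|H01]; last lra.
  have Hx : List.In (x, 0) (ends (V x)) by left.
  have H0 : 0 <= 0 <= 1 by lra.
  apply: Rle_trans (dX_le_via (edge_point_In_start x l H0) Hx) _.
  by rewrite /dist_via /= (dGxx gen) /=; lra.
- apply: Rle_antisym; last exact: dX_ge0.
  have [i [Hi [Hni ->]]] := word_path_on_edge l0 x w_neq0 Hn0.
  have Ei : i.+1 = size w.
    suff : (size w <= i.+1)%nat by lia.
    by apply/leP/INR_le; rewrite S_INR; lra.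
  have Hx : List.In ((x * wv w)%g, 0) (ends (V (x * wv w)%g)) by left.
  apply: Rle_trans (dX_le_via (edge_point_In_next Hi Hni) Hx) _.
  by rewrite /dist_via /= Ei take_size (dGxx gen) -Ei S_INR /=; lra.
- move=> s t Hs Ht; apply: Rle_antisym; [exact: dX_word_path_le|exact: dX_word_path_ge].
Qed.

End GeodesicWord.

Lemma geodesic_Vtx_exists y z : exists gam, geodesic pi (V y) (V z) gam.
Proof.
have [w [Sw Ew]] := wlen_word gen (y^-1 * z)%g.
have -> : z = (y * wv w)%g by rewrite Ew mulVKg.
case: w Sw Ew => [|l w] Sw Ew.
  exists (fun=> V y); rewrite mulg1 /geodesic; cbv beta; rewrite (dXpp gen).
  do 2 split=> //; move=> s t Hs Ht.
  have -> : s = 0 by lra.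
  have -> : t = 0 by lra.
  by rewrite Rminus_0_r Rabs_R0.
by exists (word_path (l :: w) y); apply: (@word_path_geodesic (l :: w) y l) => //; rewrite Ew.
Qed.

End WordGeodesics.

Section HyperbolicGeometry.
Variables (G : groupType) (A : finType) (pi : A -> G).
Hypothesis gen : generates pi.
Local Notation dX := (dX pi).
Local Notation gromov := (gromov pi).
Local Notation V := (@Vtx G A).
Local Open Scope R_scope.

Lemma geodesic_dist p q gam s : geodesic pi p q gam -> 0 <= s <= dX p q ->
  dX (gam s) p = s /\ dX (gam s) q = dX p q - s.
Proof.
move=> [Hp [Hq Hgam]] Hs.
have E0 := Hgam s 0 Hs (conj (Rle_refl 0) (dX_ge0 pi p q)).
have E1 := Hgam s (dX p q) Hs (conj (dX_ge0 pi p q) (Rle_refl _)).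
rewrite Rminus_0_r Rabs_right in E0; last lra.
rewrite Rabs_left1 in E1; last lra.
have T1 := dX_triangle gen (gam s) (gam 0) p.
have T2 := dX_triangle gen (gam s) p (gam 0).
have T3 := dX_triangle gen (gam s) (gam (dX p q)) q.
have T4 := dX_triangle gen (gam s) q (gam (dX p q)).
rewrite (dXC gen p) in T2; rewrite (dXC gen q) in T4.
by split; lra.
Qed.

Lemma gromov_ge0 p q z : 0 <= gromov p q z.
Proof. by have := dX_triangle gen q p z; rewrite /gromov (dXC gen q p); lra. Qed.

Lemma gromov_le_dist p q z : gromov p q z <= dX p q.
Proof. by have := dX_triangle gen p q z; rewrite /gromov (dXC gen q z); lra. Qed.

Lemma gromovC p q z : gromov p q z = gromov p z q.
Proof. by rewrite /gromov (dXC gen q z); lra. Qed.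

Lemma dist_le_gromov_of_close D p q z x y :
  dX p x + dX x q = dX p q -> dX p y + dX y z = dX p z -> dX x y <= D ->
  dX p x <= gromov p q z + D.
Proof.
move=> Hx Hy Hxy.
have T1 := dX_triangle gen p y x; have T2 := dX_triangle gen q x z.
have T3 := dX_triangle gen x y z.
rewrite /gromov (dXC gen y x) (dXC gen q x) in T1 T2 *; lra.
Qed.

Lemma geodesic_close_le_gromov C D p q o z gs gz s s' :
  dX p z <= dX q z + C -> geodesic pi p q gs -> geodesic pi p z gz ->
  0 <= s <= dX p q -> 0 <= s' <= dX p z -> dX (gs s) (gz s') <= D ->
  s <= gromov p q o + (dX q o - dX p o + C) / 2 + D.
Proof.
move=> Hz Gs Gz Hs Hs' Hd.
have [Ds1 Ds2] := geodesic_dist Gs Hs; have [Dz1 Dz2] := geodesic_dist Gz Hs'.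
have Bs : dX p (gs s) + dX (gs s) q = dX p q by rewrite (dXC gen p); lra.
have Bz : dX p (gz s') + dX (gz s') z = dX p z by rewrite (dXC gen p); lra.
have := dist_le_gromov_of_close Bs Bz Hd.
by rewrite (dXC gen p) Ds1 /gromov; lra.
Qed.

Lemma geodesic_close_ge_gromov C D p q o z gs gz s s' :
  dX q z <= dX p z + C -> geodesic pi p q gs -> geodesic pi q z gz ->
  0 <= s <= dX p q -> 0 <= s' <= dX q z -> dX (gs s) (gz s') <= D ->
  gromov p q o - (dX p o - dX q o + C) / 2 - D <= s.
Proof.
move=> Hz Gs Gz Hs Hs' Hd.
have [Ds1 Ds2] := geodesic_dist Gs Hs; have [Dz1 Dz2] := geodesic_dist Gz Hs'.
have Bs : dX q (gs s) + dX (gs s) p = dX q p by rewrite (dXC gen q) (dXC gen q p); lra.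
have Bz : dX q (gz s') + dX (gz s') z = dX q z by rewrite (dXC gen q); lra.
have := dist_le_gromov_of_close Bs Bz Hd.
by rewrite (dXC gen q) Ds2 /gromov (dXC gen q p); lra.
Qed.

Lemma gromov_min_le D (o x1 x2 y : G) : all_triangles_trim pi D ->
  Rmin (gromov (V o) (V x1) (V y)) (gromov (V o) (V x2) (V y)) <=
  gromov (V o) (V x1) (V x2) + D.
Proof.
move=> trim.
have [g1 G1] := geodesic_Vtx_exists gen o x1.
have [g2 G2] := geodesic_Vtx_exists gen o x2.
have [gy Gy] := geodesic_Vtx_exists gen o y.
have [g1y G1y] := geodesic_Vtx_exists gen x1 y.
have [g2y G2y] := geodesic_Vtx_exists gen x2 y.
have [close1 _] := trim _ _ _ _ _ _ G1 Gy G1y.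
have [close2 _] := trim _ _ _ _ _ _ G2 Gy G2y.
set t := Rmin _ _.
have t1 : t <= gromov (V o) (V x1) (V y) by apply: Rmin_l.
have t2 : t <= gromov (V o) (V x2) (V y) by apply: Rmin_r.
have t0 : 0 <= t by apply: Rmin_glb; apply: gromov_ge0.
have D1 := close1 t (conj t0 t1); have D2 := close2 t (conj t0 t2).
have [_ H1] := geodesic_dist G1 (conj t0 (Rle_trans _ _ _ t1 (gromov_le_dist _ _ _))).
have [_ H2] := geodesic_dist G2 (conj t0 (Rle_trans _ _ _ t2 (gromov_le_dist _ _ _))).
have T1 := dX_triangle gen (V x1) (g1 t) (V x2).
have T2 := dX_triangle gen (g1 t) (gy t) (V x2).
have T3 := dX_triangle gen (gy t) (g2 t) (V x2).
rewrite (dXC gen (V x1) (g1 t)) in T1; rewrite (dXC gen (gy t) (g2 t)) in T3.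
rewrite /gromov in t1 t2 *; lra.
Qed.

Lemma gromov_le_of_closest (H : {pred G}) D E (z x y : G) :
  all_triangles_trim pi D -> quasiconvex pi H E -> z \in H -> x \in H ->
  (forall h, h \in H -> dX (V z) (V y) <= dX (V h) (V y)) ->
  gromov (V z) (V x) (V y) <= E + D.
Proof.
move=> trim qc Hz Hx closest.
have [gx Gx] := geodesic_Vtx_exists gen z x.
have [gy Gy] := geodesic_Vtx_exists gen z y.
have [gxy Gxy] := geodesic_Vtx_exists gen x y.
have [close _] := trim _ _ _ _ _ _ Gx Gy Gxy.
set P := gromov _ _ _ in close *.
have P0 : 0 <= P by apply: gromov_ge0.
have Px : P <= dX (V z) (V x) by apply: gromov_le_dist.
have Py : P <= dX (V z) (V y) by rewrite /P gromovC; apply: gromov_le_dist.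
have [h [Hh Eh]] := qc _ _ _ Hz Hx Gx P (conj P0 Px).
have [_ Dy] := geodesic_dist Gy (conj P0 Py).
have T1 := dX_triangle gen (V h) (gx P) (V y).
have T2 := dX_triangle gen (gx P) (gy P) (V y).
have := close P (conj P0 (Rle_refl P)); have := closest h Hh.
rewrite (dXC gen (V h) (gx P)) in T1; lra.
Qed.

Lemma quasiconvex_ge0 (H : {pred G}) E : group_closed H -> quasiconvex pi H E -> 0 <= E.
Proof.
move=> [H1 _] qc; have [gam Ggam] := geodesic_Vtx_exists gen 1%g 1%g.
have [h [_ Eh]] := qc _ _ _ H1 H1 Ggam 0 (conj (Rle_refl 0) (dX_ge0 pi _ _)).
by have := dX_ge0 pi (gam 0) (V h); lra.
Qed.

End HyperbolicGeometry.

Section Cosets.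
Variables (G : groupType) (A : finType) (pi : A -> G).
Hypothesis gen : generates pi.
Variable H : {pred G}.
Hypothesis HG : group_closed H.
Local Notation dX := (dX pi).
Local Notation gromov := (gromov pi).
Local Notation V := (@Vtx G A).
Local Notation wv := (word_val pi).
Local Notation wl := (wlen pi).

Lemma dX_Vtx_wlen x y : dX (V x) (V y) = INR (wl (x^-1 * y)).
Proof. by rewrite dX_Vtx. Qed.

Lemma dX_Vtx1 x : dX (V 1%g) (V x) = INR (wl x).
Proof. by rewrite dX_Vtx_wlen invg1 mul1g. Qed.

(** The geodesic middle part [w'] of [w = w1 w' w2] is no longer than
    [w1^-1 v w2^-1], which joins the same cosets when [v] is a geodesic word
    from [h' x] to [x w]. *)
Lemma size_near_geodesic_le x y w h' : near_geodesic pi H x y w -> h' \in H ->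
  (size w <= wl ((h' * x)^-1 * (x * wv w)) + 4)%N.
Proof.
move=> [_ [w1 [w' [w2 [Ew [S1 [S2 [_ [geo' _]]]]]]]]] Hh.
have [v [Sv Ev]] := wlen_word gen ((h' * x)^-1 * (x * wv w))%g.
have : (size w' <= size (word_inv w1 ++ v ++ word_inv w2))%N.
  apply: geo'; rewrite /same_coset !word_val_cat !word_val_inv Ev Ew !word_val_cat.
  rewrite !invgM !mulgA; do 10 rewrite ?mulgK ?mulgV ?mul1g.
  exact: (group_closedV HG).
have Sw : size w = (size w1 + (size w' + size w2))%N by rewrite Ew !size_cat.
by rewrite !size_cat !size_word_inv Sv Sw; lia.
Qed.

Local Open Scope R_scope.

Lemma dX_near_geodesic_le x y w h' : near_geodesic pi H x y w -> h' \in H ->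
  dX (V x) (V (x * wv w)%g) <= dX (V (h' * x)%g) (V (x * wv w)%g) + 4.
Proof.
move=> ng Hh; rewrite !dX_Vtx_wlen mulKg.
have /leP/le_INR := leq_trans (wlen_le_size gen w) (size_near_geodesic_le ng Hh).
by rewrite plus_INR /=; lra.
Qed.

Lemma wlen_coset_shift_le D E g f w h1 :
  0 <= D -> all_triangles_trim pi D -> quasiconvex pi H E ->
  shortest_in_coset pi H g -> shortest_in_coset pi H f ->
  near_geodesic pi H g f w -> h1 \in H -> (h1 * g * wv w)%g = f ->
  INR (wl h1) <= 4 * E + 6 * D + 4.
Proof.
move=> D0 trim qc shg shf ng Hh1 Ef.
have HV := group_closedV HG; have HM := group_closedM HG.
have H1 : (1 \in H)%g by case: HG.
set k := (h1^-1)%g; have Hk : k \in H by apply: HV.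
set y := (g * wv w)%g.
have Ey : y = (k * f)%g by rewrite -Ef /k /y -!mulgA mulKg.
have P : gromov (V 1%g) (V k) (V g) <= E + D.
  apply: (gromov_le_of_closest gen trim qc H1 Hk) => h Hh.
  rewrite dX_Vtx1 dX_Vtx_wlen; apply/le_INR/leP/shg; exact: HV.
have Q : gromov (V k) (V 1%g) (V y) <= E + D.
  apply: (gromov_le_of_closest gen trim qc Hk H1) => h Hh.
  rewrite !dX_Vtx_wlen Ey mulKg mulgA; apply/le_INR/leP/shf; exact: HM (HV _ Hh) Hk.
have T := gromov_min_le gen 1%g g k y trim.
rewrite (gromovC gen _ (V g)) in T.
have Dgy : dX (V g) (V y) <= INR (wl g) + INR (wl f) + 4.
  have Ekg : dX (V (k * g)%g) (V y) = INR (wl (g^-1 * f)).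
    by rewrite dX_Vtx_wlen Ey invgM -mulgA mulKg.
  have := dX_near_geodesic_le ng Hk; rewrite -/y Ekg.
  have /leP/le_INR : (wl (g^-1 * f)%g <= wl g + wl f)%nat.
    by rewrite -(wlenV gen g) wlenM.
  by rewrite plus_INR; lra.
have d1k : dX (V 1%g) (V k) = INR (wl h1) by rewrite dX_Vtx1 (wlenV gen).
have d1g := dX_Vtx1 g; have d1y := dX_Vtx1 y.
have dky : dX (V k) (V y) = INR (wl f) by rewrite dX_Vtx_wlen Ey mulKg.
have P0 := gromov_ge0 gen (V 1%g) (V k) (V g).
move: P0 P Q T; rewrite /gromov (dXC gen (V k) (V 1%g)).
by rewrite (dXC gen (V y) (V g)) (dXC gen (V g) (V k)) /Rmin; case: Rle_dec; lra.
Qed.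

Lemma bigon_bounds D E g f w u h1 h2 :
  0 <= D -> all_triangles_trim pi D -> quasiconvex pi H E ->
  shortest_in_coset pi H g -> shortest_in_coset pi H f ->
  near_geodesic pi H g f w -> near_geodesic pi H g f u -> h1 \in H -> h2 \in H ->
  (h1 * g * wv w)%g = f -> (h2 * g * wv u)%g = f ->
  [/\ dX (V g) (V (g * wv w)%g) <= dX (V (h1^-1 * h2 * g)%g) (V (g * wv w)%g) + 4,
      dX (V (h1^-1 * h2 * g)%g) (V (g * wv w)%g) <= dX (V g) (V (g * wv w)%g) + 4,
      dX (V g) (V 1%g) <= dX (V (h1^-1 * h2 * g)%g) (V 1%g) &
      dX (V (h1^-1 * h2 * g)%g) (V 1%g) <= dX (V g) (V 1%g) + 2 * (4 * E + 6 * D + 4)].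
Proof.
move=> D0 trim qc shg shf ngw ngu Hh1 Hh2 Ew Eu.
have HV := group_closedV HG.
have Hh : (h1^-1 * h2)%g \in H by apply: (group_closedM HG); first exact: HV.
have Eg x : dX (V x) (V 1%g) = INR (wl x) by rewrite (dXC gen) dX_Vtx1.
rewrite !Eg; split.
- exact: dX_near_geodesic_le ngw Hh.
- have Ef' : (h1^-1 * h2 * (g * wv u) = g * wv w)%g.
    by rewrite !mulgA -(mulgA (h1^-1)%g) -(mulgA (h1^-1)%g) Eu -Ew !mulgA mulVg mul1g.
  have := dX_near_geodesic_le ngu (HV _ Hh).
  rewrite -(dX_Vtx_mul2l pi (h1^-1 * h2)%g g).
  by rewrite -(dX_Vtx_mul2l pi (h1^-1 * h2)%g ((h1^-1 * h2)^-1 * g)) mulVKg Ef'.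
- by apply/le_INR/leP/shg.
- have := wlen_coset_shift_le D0 trim qc shg shf ngw Hh1 Ew.
  have := wlen_coset_shift_le D0 trim qc shg shf ngu Hh2 Eu.
  have /leP/le_INR : (wl (h1^-1 * h2 * g)%g <= wl h1 + wl h2 + wl g)%nat.
    rewrite -(wlenV gen h1); apply: leq_trans (wlenM gen _ g) _.
    by rewrite leq_add2r wlenM.
  by rewrite !plus_INR; lra.
Qed.

End Cosets.

Theorem lemma4p2 (G : groupType) (A : finType) (pi : A -> G) (H : {pred G})
    (delta : nat) (E : R) :
  generates pi ->
  group_closed H ->
  (10 <= delta)%N ->
  all_triangles_trim pi (INR delta) ->
  quasiconvex pi H E ->
  exists K2 : R, (0 < K2)%R /\
  forall (g f : G) (w u : seq (A * bool)) (h1 h2 : G),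
    shortest_in_coset pi H g -> shortest_in_coset pi H f ->
    near_geodesic pi H g f w -> near_geodesic pi H g f u ->
    h1 \in H -> h2 \in H ->
    (h1 * g * word_val pi w)%g = f -> (h2 * g * word_val pi u)%g = f ->
    let f' := (g * word_val pi w)%g in
    let h := (h1^-1 * h2)%g in
    forall sigma alpha beta : R -> pointX G A,
      geodesic pi (@Vtx G A g) (@Vtx G A (h * g)%g) sigma ->
      geodesic pi (@Vtx G A g) (@Vtx G A f') alpha ->
      geodesic pi (@Vtx G A (h * g)%g) (@Vtx G A f') beta ->
      let c := gromov pi (@Vtx G A g) (@Vtx G A (h * g)%g) (@Vtx G A 1%g) in
      forall r : R, (0 <= r)%R -> (0 <= c - r)%R ->
        (c + r <= dX pi (@Vtx G A g) (@Vtx G A (h * g)%g))%R ->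
        ((forall s, (c - r <= s <= c + r)%R ->
            exists s', (0 <= s' <= dX pi (@Vtx G A g) (@Vtx G A f'))%R /\
                       (dX pi (sigma s) (alpha s') <= INR delta)%R) \/
         (forall s, (c - r <= s <= c + r)%R ->
            exists s', (0 <= s' <= dX pi (@Vtx G A (h * g)%g) (@Vtx G A f'))%R /\
                       (dX pi (sigma s) (beta s') <= INR delta)%R)) ->
        (2 * r <= K2)%R.
Proof.
move=> gen HG _ trim qc.
have D0 := pos_INR delta; have E0 := quasiconvex_ge0 gen HG qc.
exists (2 * (4 * E + 6 * INR delta + 4) + 2 * INR delta + 4)%R; split; first lra.
move=> g f w u h1 h2 shg shf ngw ngu Hh1 Hh2 Ew Eu f' h sigma alpha beta Gs Ga Gb
  c r r0 cr0 crd close.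
have [Lw Lu Sg Shg] := bigon_bounds gen HG D0 trim qc shg shf ngw ngu Hh1 Hh2 Ew Eu.
rewrite -/f' -/h in Lw Lu Sg Shg.
case: close => [close|close].
- have [|s' [Hs' Hd]] := close (c + r)%R; first lra.
  have := geodesic_close_le_gromov gen (Vtx A 1%g) Lw Gs Ga _ Hs' Hd.
  by rewrite -/c; lra.
- have [|s' [Hs' Hd]] := close (c - r)%R; first lra.
  have := geodesic_close_ge_gromov gen (Vtx A 1%g) Lu Gs Gb _ Hs' Hd.
  by rewrite -/c; lra.
Qed.
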